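(* Let $S\subset\mathrm{supp}(\Pi)$ be a set in $\mathcal B_m$ for some level $m$ of the tree decomposition, let $t>0$, and set $h_n=\left\{\Pi(S)\big(t+d\log(n/\Pi(S))\big)/n\right\}^{1/(d+2)}$. Assume (A0)–(A3), $h_n\le 2^{-m}$, and $t+d^2\log(1/h_n)\le nh_n^d$. Let $\widehat f(x;h_n)=\widehat\eta_1(x;h_n,S)-\widehat\eta_{-1}(x;h_n,S)$ be built from $n$ i.i.d. observations of the conditional law of $(X,A,R)$ given $X\in S$. Then with probability at least $1-4e^{-t}$, \[ \sup_{x\in\mathrm{supp}(\Pi)\cap S}|\widehat f(x;h_n)-f^\ast(x)|\le 4Ch_n, \] where $C=C(M,c_1,c_2,L,L_K,\|K\|_\infty,\ell_K,R_K)$ is the constant for which, for every such $S$, every $0<h\le2^{-m}$, $j=\pm1$, and $t>0$ with $t+d^2\log(1/h)\le nh^d$, with probability $\ge1-2e^{-t}$ one has $\sup_{x\in\mathrm{supp}(\Pi)\cap S}|\widehat\eta_j(x;h,S)-\eta_j(x)|\le C\big(h+\sqrt{\Pi(S)(t+d^2\log(1/h))/(nh^d)}\big)$.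
   Context: $(X,A,R)$ is a random triple: $X\in\mathbb R^p$ with known marginal distribution $\Pi$, $A\in\{-1,1\}$ with $P(A=1\mid X)=P(A=-1\mid X)=1/2$, $R$ real. $\eta_j(x)=\mathbb E[R\mid A=j,X=x]$ and $f^\ast=\eta_1-\eta_{-1}$. For measurable $S$, $\Pi_S(\cdot)=\Pi(\cdot\mid X\in S)$. $K_h(u)=K(u/h)/h^p$, $Q_h(x\mid S)=\int K_h(x-y)\,d\Pi_S(y)$, and for i.i.d. $(X^{(i)},A^{(i)},R^{(i)})_{i=1}^n$ from the conditional law given $X\in S$, $\widehat\eta_j(x;h,S)=\frac1n\sum_{i=1}^n\frac{R^{(i)}I\{A^{(i)}=j\}K_h(x-X^{(i)})}{Q_h(x\mid S)P(A^{(i)}=j)}$. Tree decomposition: $\{T_{i,j}\}$ with $T_{1,1}=\mathrm{supp}(\Pi)$, each level a disjoint partition, nested levels, $\mathrm{diam}(T_{i,j})\le K_12^{-i}$, and an integer $1\le d\le p$ and $0<c_1\le c_2$ with $c_1r^d\le\Pi(B(x,r)\cap T_{i,j})\le c_2r^d$ for $0<r\le2^{-i}$, $x\in T_{i,j}$; $\mathcal B_i$ is generated by level-$i$ cells. (A0) $\eta_{\pm1}$ are $L$-Lipschitz. (A1) $|R|\le M$ a.s. (A2) $K\ge0$ compactly supported, $K(x)\le\|K\|_\infty I\{\|x\|_2\le R_K\}$, $L_K$-Lipschitz, $K(x)\ge\ell_KI\{\|x\|_2\le1\}$, $\ell_K>0$. (A3) $\mathrm{supp}(\Pi)$ admits such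 a tree decomposition. *)

From mathcomp Require Import all_boot all_order all_algebra.
From mathcomp Require Import all_classical all_reals all_analysis.
Set Implicit Arguments. Unset Strict Implicit. Unset Printing Implicit Defensive.
Import Order.TTheory GRing.Theory Num.Theory.
Local Open Scope classical_set_scope.
Local Open Scope ring_scope.

Section Defs.
Context {R : realType} {p : nat}.

(** R^p is represented by [p.-tuple R] (carries the product/Borel sigma-algebra). *)
Local Notation V := (p.-tuple R).

Definition vsub (x y : V) : V := [tuple tnth x i - tnth y i | i < p].
Definition vscale (c : R) (x : V) : V := [tuple c * tnth x i | i < p].
Definition enorm (x : V) : R := Num.sqrt (\sum_(i < p) tnth x i ^+ 2).
Definition eball (x : V) (r : R) : set V := [set y | enorm (vsub y x) < r].

Definition supp (Pi : probability V R) : set V :=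
  [set x | forall r : R, 0 < r -> (0 < Pi (eball x r))%E].

(** Observations (X, A, R) live in R^p x R x R :  z.1.1 = X, z.1.2 = A, z.2 = R. *)
Definition obs := (V * R * R)%type.

Definition supnorm (K : V -> R) : R := sup [set `|K u| | u in [set: V]].

Definition Kh (K : V -> R) (h : R) (u : V) : R := K (vscale h^-1 u) / h ^+ p.

Definition Qh (Pi : probability V R) (K : V -> R) (h : R) (S : set V) (x : V) : R :=
  (\int[Pi]_(y in S) Kh K h (vsub x y)) / fine (Pi S).

Definition eta_hat {dO} {Om : measurableType dO} (P : probability Om R)
  (n : nat) (Z : 'I_n -> Om -> obs) (Pi : probability V R) (K : V -> R)
  (h : R) (S : set V) (j : R) (x : V) (w : Om) : R :=
  n%:R^-1 * \sum_(i < n)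
    ((Z i w).2 * (if (Z i w).1.2 == j then 1 else 0) * Kh K h (vsub x (Z i w).1.1)
     / (Qh Pi K h S x * fine (P (Z i @^-1` [set z | z.1.2 = j])))).

Definition f_hat {dO} {Om : measurableType dO} (P : probability Om R)
  (n : nat) (Z : 'I_n -> Om -> obs) (Pi : probability V R) (K : V -> R)
  (h : R) (S : set V) (x : V) (w : Om) : R :=
  eta_hat P Z Pi K h S 1 x w - eta_hat P Z Pi K h S (-1) x w.

(** "E holds with probability at least a" (inner probability, so that it also
    makes sense if E is not measurable). *)
Definition holds_wp_ge {dO} {Om : measurableType dO} (P : probability Om R)
  (E : set Om) (a : R) : Prop :=
  exists F, [/\ measurable F, F `<=` E & (a%:E <= P F)%E].

(** Z_1..Z_n are i.i.d. with the conditional law of (X,A,R) given X in S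
    (joint law = product of the conditional laws, tested on all measurable
    rectangles E_1 x ... x E_n). *)
Definition iid_cond_sample (mu : probability obs R) (S : set V)
  {dO} {Om : measurableType dO} (P : probability Om R)
  (n : nat) (Z : 'I_n -> Om -> obs) : Prop :=
  (forall i, measurable_fun [set: Om] (Z i)) /\
  forall E : 'I_n -> set obs, (forall i, measurable (E i)) ->
    fine (P (\bigcap_(i in [set: 'I_n]) (Z i @^-1` E i))) =
    \prod_(i < n) (fine (mu (E i `&` [set z | S z.1.1]))
                   / fine (mu [set z | S z.1.1])).

(** The model: mu is the joint law of (X,A,R), Pi the marginal of X,
    P(A=1|X) = P(A=-1|X) = 1/2, and eta j (j = 1,-1) is (a version of)
    E[R | A=j, X=x], characterised by the defining identity of conditional
    expectation. *)
Definition model (mu : probability obs R) (Pi : probability V R)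
  (eta : R -> V -> R) : Prop :=
  [/\ forall B, measurable B -> mu [set z | B z.1.1] = Pi B,
      mu [set z | z.1.2 = 1 \/ z.1.2 = -1] = 1%E,
      forall B, measurable B ->
        mu [set z | z.1.2 = 1 /\ B z.1.1] = ((2^-1)%:E * Pi B)%E &
      forall j, (j = 1 \/ j = -1) ->
        measurable_fun [set: V] (eta j) /\
        forall B, measurable B ->
          (\int[mu]_(z in [set z | z.1.2 = j /\ B z.1.1]) (z.2)%:E =
           \int[mu]_(z in [set z | z.1.2 = j /\ B z.1.1]) (eta j z.1.1)%:E)%E].

Definition A0 (eta : R -> V -> R) (L : R) : Prop :=
  forall j, (j = 1 \/ j = -1) ->
    forall x y, `|eta j x - eta j y| <= L * enorm (vsub x y).

Definition A1 (mu : probability obs R) (M : R) : Prop :=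
  mu [set z | `|z.2| <= M] = 1%E.

Definition A2 (K : V -> R) (LK RK lK : R) : Prop :=
  [/\ forall u, 0 <= K u,
      forall u, K u <= supnorm K * (enorm u <= RK)%R%:R,
      forall u v, `|K u - K v| <= LK * enorm (vsub u v),
      forall u, lK * (enorm u <= 1)%R%:R <= K u &
      0 < lK].

Definition tree_decomp (Pi : probability V R) (T : nat -> nat -> set V)
  (K1 : R) (d : nat) (c1 c2 : R) : Prop :=
  [/\ T 1%N 1%N = supp Pi,
      forall i j, (1 <= i)%N -> measurable (T i j),
      forall i j j', (1 <= i)%N -> j <> j' -> T i j `&` T i j' = set0,
      forall i, (1 <= i)%N -> \bigcup_j T i j = supp Pi &
      forall i j, (1 <= i)%N -> exists j', T i.+1 j `<=` T i j'] /\
  [/\ forall i j x y, (1 <= i)%N -> T i j x -> T i j y ->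
        enorm (vsub x y) <= K1 * 2 ^- i,
      (1 <= d <= p)%N,
      0 < c1 <= c2 &
      forall i j x r, (1 <= i)%N -> 0 < r <= 2 ^- i -> T i j x ->
        c1 * r ^+ d <= fine (Pi (eball x r `&` T i j)) <= c2 * r ^+ d].

Definition in_B (Pi : probability V R) (T : nat -> nat -> set V) (m : nat)
  (S : set V) : Prop :=
  <<s supp Pi, range (T m) >> S.

Definition eta_dev_const (mu : probability obs R) (Pi : probability V R)
  (eta : R -> V -> R) (K : V -> R) (T : nat -> nat -> set V) (d : nat)
  {dO} {Om : measurableType dO} (P : probability Om R) (C : R) : Prop :=
  forall (m : nat) (S : set V), (1 <= m)%N -> S `<=` supp Pi -> in_B Pi T m S ->
  (0 < Pi S)%E ->
  forall (n : nat) (h j t : R), (0 < n)%N -> 0 < h <= 2 ^- m ->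
  (j = 1 \/ j = -1) -> 0 < t ->
  t + (d ^ 2)%:R * ln h^-1 <= n%:R * h ^+ d ->
  forall Z : 'I_n -> Om -> obs, iid_cond_sample mu S P Z ->
  holds_wp_ge P
    [set w | forall x, supp Pi x -> S x ->
       `|eta_hat P Z Pi K h S j x w - eta j x|
         <= C * (h + Num.sqrt (fine (Pi S) * (t + (d ^ 2)%:R * ln h^-1)
                               / (n%:R * h ^+ d)))]
    (1 - 2 * expR (- t)).

End Defs.

From mathcomp Require Import all_boot all_order all_algebra.
From mathcomp Require Import all_classical all_reals all_analysis.
From mathcomp Require Import ring lra.
Import Order.TTheory GRing.Theory Num.Theory.
Local Open Scope classical_set_scope.
Local Open Scope ring_scope.

(* The bandwidth h_n balances the two terms of the deviation bound for
   eta_hat: h_n^(d+2) = Pi(S)(t + d log(n/Pi(S)))/n makes the stochastic term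
   sqrt(Pi(S)(t + d^2 log(1/h_n))/(n h_n^d)) at most h_n, because
   (d+2) log(1/h_n) <= log(n/Pi(S)).  Hence each of eta_hat_1, eta_hat_{-1}
   is within 2 C h_n of its target with probability >= 1 - 2 e^-t, and a
   union bound gives the claim for their difference. *)

Section inner_probability.
Context {R : realType} {dO : measure_display} {Om : measurableType dO}
  {P : probability Om R}.

Lemma probability_setI_ge (A B : set Om) (a b : R) :
  measurable A -> measurable B -> (a%:E <= P A)%E -> (b%:E <= P B)%E ->
  ((a + b - 1)%:E <= P (A `&` B))%E.
Proof.
move=> mA mB PA PB.
have PAfin : (P A < +oo)%E by rewrite ltey_eq fin_num_measure.
have PU : P (A `|` B) = (P A + P B - P (A `&` B))%E := measureUfinl mA mB PAfin.
have PU1 := probability_le1 P (measurableU _ _ mA mB).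
move: PA PB PU PU1.
rewrite -(fineK (fin_num_measure P _ mA)) -(fineK (fin_num_measure P _ mB)).
rewrite -(fineK (fin_num_measure P _ (measurableI _ _ mA mB))).
rewrite -(fineK (fin_num_measure P _ (measurableU _ _ mA mB))).
rewrite -EFinD !lee_fin => PA PB PU PU1.
have {}PU := EFin_inj PU.
lra.
Qed.

Lemma holds_wp_ge_le0 (E : set Om) (a : R) : a <= 0 -> holds_wp_ge P E a.
Proof.
by move=> a0; exists set0; split; rewrite ?measure0 ?lee_fin //; exact: sub0set.
Qed.

Lemma holds_wp_geW (E E' : set Om) (a b : R) :
  E `<=` E' -> b <= a -> holds_wp_ge P E a -> holds_wp_ge P E' b.
Proof.
move=> EE' ba [F [mF FE PF]]; exists F; split => //.
- exact: subset_trans FE EE'.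
- by apply: le_trans PF; rewrite lee_fin.
Qed.

Lemma holds_wp_geI {E1 E2 : set Om} {a b : R} :
  holds_wp_ge P E1 a -> holds_wp_ge P E2 b ->
  holds_wp_ge P (E1 `&` E2) (a + b - 1).
Proof.
move=> [F1 [mF1 FE1 PF1]] [F2 [mF2 FE2 PF2]].
exists (F1 `&` F2); split; first exact: measurableI.
- by move=> w [/FE1 ? /FE2 ?].
- exact: probability_setI_ge.
Qed.

End inner_probability.

Lemma sigma_algebra_measurable_on d (T : measurableType d) (D : set T) :
  measurable D -> sigma_algebra D measurable.
Proof.
move=> mD; split.
- exact: measurable0.
- by move=> A mA; exact: measurableD.
- by move=> F mF; exact: bigcupT_measurable.
Qed.

Lemma g_sigma_measurable d (T : measurableType d) (D : set T) (G : set (set T)) :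
  measurable D -> G `<=` measurable -> <<s D, G >> `<=` measurable.
Proof. by move=> mD; apply: smallest_sub; exact: sigma_algebra_measurable_on. Qed.

Lemma in_B_measurable {R : realType} {p : nat} {Pi : probability (p.-tuple R) R}
  {T : nat -> nat -> set (p.-tuple R)} {K1 : R} {d : nat} {c1 c2 : R}
  {m : nat} {S : set (p.-tuple R)} :
  tree_decomp Pi T K1 d c1 c2 -> (1 <= m)%N -> in_B Pi T m S -> measurable S.
Proof.
move=> [[T11 mT _ _ _] _] m1; apply: g_sigma_measurable.
- by rewrite -T11; exact: mT.
- by move=> _ [j _ <-]; exact: mT.
Qed.

Lemma expRN1_gt_quarter (R : realType) : 4^-1 < expR (-1) :> R.
Proof.
have half : 2^-1 < expR (- 2^-1) :> R.
  have := @expR_gt1Dx R (- 2^-1); rewrite oppr_eq0 invr_eq0 pnatr_eq0 /=.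
  by move=> /(_ isT); apply: le_lt_trans; lra.
have -> : - 1 = - 2^-1 + - 2^-1 :> R by field.
rewrite expRD; have e0 := expR_gt0 (- 2^-1 : R).
have -> : 4^-1 = 2^-1 * 2^-1 :> R by field.
by apply: ltr_pM => //; lra.
Qed.

Lemma ge1_of_sub_4expRN_gt0 {R : realType} {t : R} :
  0 < 1 - 4 * expR (- t) -> 1 <= t.
Proof.
move=> pos; rewrite leNgt; apply/negP => t1.
have : expR (-1) <= expR (- t) by rewrite ler_expR; lra.
have := expRN1_gt_quarter R; lra.
Qed.

Definition bandwidth {R : realType} (s t : R) (n d : nat) : R :=
  (s * (t + d%:R * ln (n%:R / s)) / n%:R) `^ (d.+2%:R)^-1.

Section bandwidth.
Context {R : realType} {s t : R} {n : nat} (d : nat).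
Hypotheses (s0 : 0 < s) (s1 : s <= 1) (n0 : (0 < n)%N) (t1 : 1 <= t).

Local Notation l := (ln (n%:R / s)).
Local Notation h := (bandwidth s t n d).

Let n_gt0 : 0 < n%:R :> R. Proof. by rewrite ltr0n. Qed.

Let l_ge0 : 0 <= l.
Proof. by apply: ln_ge0; rewrite ler_pdivlMr // mul1r (le_trans s1) ?ler1n. Qed.

Let numerator_ge1 : 1 <= t + d%:R * l.
Proof. by have := mulr_ge0 (ler0n R d) l_ge0; have := t1; lra. Qed.

Let numerator_gt0 : 0 < t + d%:R * l.
Proof. exact: lt_le_trans ltr01 numerator_ge1. Qed.

Let base_gt0 : 0 < s * (t + d%:R * l) / n%:R.
Proof. by rewrite divr_gt0 // mulr_gt0. Qed.

Lemma bandwidth_gt0 : 0 < h.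
Proof. exact: powR_gt0. Qed.

Lemma bandwidth_exp : h ^+ d.+2 = s * (t + d%:R * l) / n%:R.
Proof.
rewrite -powR_mulrn; last exact: powR_ge0.
by rewrite -powRrM mulVf ?pnatr_eq0 // powRr1 // ltW.
Qed.

Lemma ln_inv_bandwidth : d.+2%:R * ln h^-1 = l - ln (t + d%:R * l).
Proof.
rewrite lnV ?posrE ?bandwidth_gt0 // /bandwidth ln_powR mulrN mulrA.
rewrite mulfV ?pnatr_eq0 // mul1r ln_div ?posrE ?mulr_gt0 // lnM ?posrE //.
rewrite ln_div ?posrE //; ring.
Qed.

Lemma ln_inv_bandwidth_le : (d ^ 2)%:R * ln h^-1 <= d%:R * l.
Proof.
have [y_lt0|y_ge0] := ltP (ln h^-1) 0.
  apply: (@le_trans _ _ 0); first exact: mulr_ge0_le0 (ltW y_lt0).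
  exact: mulr_ge0 l_ge0.
have lnt0 : 0 <= ln (t + d%:R * l) by exact: ln_ge0.
have := ln_inv_bandwidth; rewrite -addn2 natrD => eq_ln.
have dy_le : d%:R * ln h^-1 <= l by lra.
by rewrite natrX expr2 -mulrA ler_wpM2l.
Qed.

Lemma stochastic_term_le_bandwidth :
  Num.sqrt (s * (t + (d ^ 2)%:R * ln h^-1) / (n%:R * h ^+ d)) <= h.
Proof.
have h0 := bandwidth_gt0.
rewrite -[leRHS](ger0_norm (ltW h0)) -sqrtr_sqr ler_sqrt ?sqr_ge0 //.
rewrite ler_pdivrMr ?mulr_gt0 ?exprn_gt0 // mulrCA -exprD addnC addn2.
rewrite bandwidth_exp mulrCA divff ?pnatr_eq0 -?lt0n // mulr1 ler_pM2l //.
by have := ln_inv_bandwidth_le; lra.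
Qed.

End bandwidth.

Lemma dev_difference_le (R : realType) (a1 a2 e1 e2 C B h : R) :
  `|a1 - e1| <= C * B -> `|a2 - e2| <= C * B -> 0 < B -> B <= 2 * h ->
  `|(a1 - a2) - (e1 - e2)| <= 4 * C * h.
Proof.
move=> dev1 dev2 B0 B2h.
have C0 : 0 <= C by rewrite -(pmulr_lge0 _ B0) (le_trans _ dev1).
have -> : (a1 - a2) - (e1 - e2) = (a1 - e1) - (a2 - e2) by ring.
apply: le_trans (ler_normB _ _) _.
have : C * B <= C * (2 * h) by exact: ler_wpM2l.
lra.
Qed.

Theorem corollaryA1 (R : realType) (p d : nat)
  (Pi : probability (p.-tuple R) R) (mu : probability (@obs R p) R)
  (eta : R -> p.-tuple R -> R) (K : p.-tuple R -> R)
  (M L LK RK lK : R) (T : nat -> nat -> set (p.-tuple R)) (K1 c1 c2 : R)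
  (dO : measure_display) (Om : measurableType dO) (P : probability Om R)
  (C : R) (m : nat) (S : set (p.-tuple R)) (t : R) (n : nat)
  (Z : 'I_n -> Om -> @obs R p) :
  model mu Pi eta ->
  A0 eta L -> A1 mu M -> A2 K LK RK lK -> tree_decomp Pi T K1 d c1 c2 ->
  eta_dev_const mu Pi eta K T d P C ->
  (1 <= m)%N -> S `<=` supp Pi -> in_B Pi T m S -> (0 < Pi S)%E ->
  0 < t -> (0 < n)%N ->
  let hn := (fine (Pi S) * (t + d%:R * ln (n%:R / fine (Pi S))) / n%:R)
              `^ (d.+2%:R)^-1 in
  hn <= 2 ^- m ->
  t + (d ^ 2)%:R * ln hn^-1 <= n%:R * hn ^+ d ->
  iid_cond_sample mu S P Z ->
  holds_wp_ge P
    [set w | forall x, supp Pi x -> S x ->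
       `|f_hat P Z Pi K hn S x w - (eta 1 x - eta (-1) x)| <= 4 * C * hn]
    (1 - 4 * expR (- t)).
Proof.
move=> _ _ _ _ tree dev m1 Ssupp SB PS0 t0 n0 hn hn_le hcond Ziid.
have mS := in_B_measurable tree m1 SB.
have PSfin := fin_num_measure Pi S mS.
have s0 : 0 < fine (Pi S) by rewrite -lte_fin fineK.
have s1 : fine (Pi S) <= 1 by rewrite -lee_fin fineK // probability_le1.
(* For t < 1 the claim is vacuous; t >= 1 gives log(t + d log(n/Pi S)) >= 0. *)
have [|pos] := leP (1 - 4 * expR (- t)) 0; first exact: holds_wp_ge_le0.
have t1 := ge1_of_sub_4expRN_gt0 pos.
have h0 : 0 < hn <= 2 ^- m by rewrite hn_le andbT; exact: bandwidth_gt0.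
have := holds_wp_geI
  (dev m S m1 Ssupp SB PS0 n hn 1 t n0 h0 (or_introl erefl) t0 hcond Z Ziid)
  (dev m S m1 Ssupp SB PS0 n hn (-1) t n0 h0 (or_intror erefl) t0 hcond Z Ziid).
apply: holds_wp_geW; last by lra.
move=> w [dev1 dev2] x suppx Sx.
apply: dev_difference_le (dev1 x suppx Sx) (dev2 x suppx Sx) _ _.
- by rewrite ltr_wpDr ?sqrtr_ge0 //; case/andP: h0.
- have := stochastic_term_le_bandwidth d s0 s1 n0 t1.
  by rewrite -[bandwidth _ _ _ _]/hn; lra.
Qed.
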